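(* The following two statements are equivalent: (i) For every finite simple undirected graph $G$, the complete graph $K_{\chi(G)}$ is a minor of $G$. (ii) For every finite simple undirected graph $G$ that is not complete, there is a minor $M$ of $G$ such that $M \not\cong G$ and there is a graph homomorphism $G \to M$.
   Context: Graphs are simple and undirected: $G=(V,E)$ with $E \subseteq \{\{x,y\}: x,y\in V,\ x\neq y\}$. $\chi(G)$ denotes the chromatic number of $G$, i.e. the least cardinal $\lambda$ such that there is a graph homomorphism $G \to K_\lambda$; $K_\alpha$ is the complete graph on $\alpha$ vertices. Disjoint sets $S,T\subseteq V(G)$ are connected to each other if there are $s\in S$, $t\in T$ with $\{s,t\}\in E(G)$. For a collection $\mathcal D$ of pairwise disjoint, nonempty subsets of $V(G)$, each inducing a connected subgraph, let $G(\mathcal D)$ be the graph with vertex set $\mathcal D$ in which distinct $d,e\in\mathcal D$ are adjacent iff $d$ and $e$ are connected to each other. A graph $M$ is a minor of $G$ if there is such a collection $\mathcal D$ and an injective graph homomorphism $M \to G(\mathcal D)$. *)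

From mathcomp Require Import all_boot.
Set Implicit Arguments. Unset Strict Implicit. Unset Printing Implicit Defensive.

Definition simple_graph (T : finType) (e : rel T) : Prop :=
  symmetric e /\ irreflexive e.

Definition graph_hom (T U : finType) (eT : rel T) (eU : rel U) (f : T -> U) : Prop :=
  forall x y, eT x y -> eU (f x) (f y).

Definition K_rel (n : nat) : rel 'I_n := fun x y => x != y.

Definition complete_graph (T : finType) (e : rel T) : Prop :=
  forall x y : T, x != y -> e x y.

Definition colorableb (T : finType) (e : rel T) (n : nat) : bool :=
  [exists f : {ffun T -> 'I_n}, [forall x, forall y, e x y ==> K_rel (f x) (f y)]].

(* chromatic number: the least n with a homomorphism G -> K_n.
   Such an n always exists (n = #|T|) for loopless graphs; the fallback 0 is
   only used for graphs with loops, which never occur below. *)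
Definition chi (T : finType) (e : rel T) : nat :=
  (if colorableb e #|T| as b return (colorableb e #|T| = b -> nat)
   then fun h => ex_minn (ex_intro (colorableb e) #|T| h)
   else fun _ => 0) erefl.

Definition induces_connected (T : finType) (e : rel T) (S : {set T}) : Prop :=
  forall x y, x \in S -> y \in S ->
    connect [rel a b | [&& a \in S, b \in S & e a b]] x y.

Definition sets_connected (T : finType) (e : rel T) (S S' : {set T}) : Prop :=
  exists s t, [/\ s \in S, t \in S' & e s t].

Definition branch_collection (T : finType) (e : rel T) (D : {set {set T}}) : Prop :=
  [/\ (forall d, d \in D -> d != set0),
      (forall d, d \in D -> induces_connected e d) &
      (forall d d', d \in D -> d' \in D -> d != d' -> [disjoint d & d'])].

Definition GD_adj (T : finType) (e : rel T) (d d' : {set T}) : Prop :=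
  d != d' /\ sets_connected e d d'.

Definition is_minor (U : finType) (eM : rel U) (T : finType) (e : rel T) : Prop :=
  exists D : {set {set T}}, branch_collection e D /\
  exists f : U -> {set T},
    [/\ (forall u, f u \in D), injective f &
        (forall u v, eM u v -> GD_adj e (f u) (f v))].

Definition graph_iso (T U : finType) (eT : rel T) (eU : rel U) : Prop :=
  exists f : T -> U, bijective f /\ forall x y, eU (f x) (f y) = eT x y.

From mathcomp Require Import all_boot zify.
Set Implicit Arguments. Unset Strict Implicit.

(* (i) => (ii): take M = K_chi(G); it is a minor by (i), G maps to it by an
   optimal colouring, and it is not isomorphic to G because G is not complete.
   (ii) => (i): induct on G ordered by number of vertices, then number of edges.
   A minor not isomorphic to G is strictly smaller in this order, since a minor
   with as many vertices has singleton branch sets and is a spanning subgraph.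
   A complete G contains K_chi outright; otherwise (ii) gives such a minor M with
   a homomorphism G -> M, so chi(G) <= chi(M) and K_chi(M) is a minor of M, hence
   of G. *)

Lemma if_dep_true (c : bool) (H : c) (A : c = true -> nat) (B : c = false -> nat) :
  (if c as b return (c = b -> nat) then A else B) erefl = A H.
Proof. by case: c H A B => // H A B; rewrite (eq_irrelevance H erefl). Qed.

Section Colourings.

Variables (T : finType) (e : rel T).

Lemma colorableP n :
  reflect (exists f : T -> 'I_n, graph_hom e (@K_rel n) f) (colorableb e n).
Proof.
apply: (iffP existsP) => [[c /forallP c_ok] | [f f_hom]].
  by exists c => x y; apply/implyP; move/forallP: (c_ok x).
exists [ffun x => f x]; apply/forallP => x; apply/forallP => y.
by apply/implyP => /f_hom; rewrite !ffunE.
Qed.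

Lemma colorable_card : simple_graph e -> colorableb e #|T|.
Proof.
case=> _ e_irr; apply/colorableP; exists enum_rank => x y.
by apply: contraTneq => /enum_rank_inj ->; rewrite e_irr.
Qed.

Lemma chi_colorable_min : simple_graph e ->
  colorableb e (chi e) /\ forall n, colorableb e n -> chi e <= n.
Proof.
move/colorable_card => e_col; rewrite /chi (if_dep_true e_col).
by case: ex_minnP.
Qed.

End Colourings.

Lemma chi_hom (T U : finType) (e : rel T) (eM : rel U) (f : T -> U) :
  simple_graph e -> simple_graph eM -> graph_hom e eM f -> chi e <= chi eM.
Proof.
move=> e_simple eM_simple f_hom.
have [/colorableP [c c_hom] _] := chi_colorable_min eM_simple.
apply: (chi_colorable_min e_simple).2; apply/colorableP.
by exists (c \o f) => x y /f_hom /c_hom.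
Qed.

Definition branch_map (U T : finType) (eM : rel U) (e : rel T) (f : U -> {set T}) :=
  [/\ forall u, f u != set0, forall u, induces_connected e (f u),
      forall u v, u != v -> [disjoint f u & f v]
    & forall u v, eM u v -> GD_adj e (f u) (f v)].

Section BranchMaps.

Variables (U T : finType) (eM : rel U) (e : rel T) (f : U -> {set T}).
Hypothesis f_branch : branch_map eM e f.

Lemma branch_mem_eq u v x : x \in f u -> x \in f v -> u = v.
Proof.
case: f_branch => _ _ f_dis _ xu xv; apply/eqP/negP => /negP/f_dis/disjointFr.
by move/(_ _ xu); rewrite xv.
Qed.

Lemma branch_map_inj : injective f.
Proof.
move=> u v fuv; case: f_branch => /(_ u)/set0Pn [x xu] _ _ _.
by apply: (branch_mem_eq xu); rewrite -fuv.
Qed.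

Lemma branch_rep : exists2 h : U -> T, injective h & forall u, h u \in f u.
Proof.
case: f_branch => f_ne _ _ _.
have f_ex u : exists x, x \in f u by apply/set0Pn.
exists (fun u => xchoose (f_ex u)) => [u v huv|u]; last exact: xchooseP.
by apply: (branch_mem_eq (xchooseP (f_ex u))); rewrite huv; apply: xchooseP.
Qed.

End BranchMaps.

Lemma minorP (U T : finType) (eM : rel U) (e : rel T) :
  is_minor eM e <-> exists f, branch_map eM e f.
Proof.
split=> [[D [[D_ne D_con D_dis] [f [fD f_inj f_adj]]]] | [f f_branch]].
  exists f; split=> // [u|u|u v uv]; [exact: D_ne | exact: D_con |].
  by apply: D_dis => //; apply: contra uv => /eqP/f_inj->.
have [f_ne f_con f_dis f_adj] := f_branch.
exists (f @: setT); split; last first.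
  by exists f; split=> // [u|]; [apply: imset_f | apply: branch_map_inj f_branch].
split=> [_ /imsetP[u _ ->] // | _ /imsetP[u _ ->] // |].
move=> _ _ /imsetP[u _ ->] /imsetP[v _ ->] fuv.
by apply: f_dis; apply: contra fuv => /eqP->.
Qed.

Lemma minor_refl (T : finType) (e : rel T) : irreflexive e -> is_minor e e.
Proof.
move=> e_irr; apply/minorP; exists set1; split=> [x|x|x y xy|x y exy].
- by apply/set0Pn; exists x; rewrite set11.
- by move=> y z /set1P-> /set1P->; apply: connect0.
- by rewrite disjoints1 inE.
split; first by apply: contraTneq exy => /set1_inj->; rewrite e_irr.
by exists x, y; rewrite !set11.
Qed.

Lemma minor_sub_inj (U V T : finType) (eU : rel U) (eV : rel V) (e : rel T)
    (g : U -> V) :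
  injective g -> graph_hom eU eV g -> is_minor eV e -> is_minor eU e.
Proof.
move=> g_inj g_hom /minorP [f [f_ne f_con f_dis f_adj]].
apply/minorP; exists (f \o g); split=> [u|u|u v uv|u v /g_hom/f_adj //].
- exact: f_ne.
- exact: f_con.
by apply: f_dis; apply: contra uv => /eqP/g_inj->.
Qed.

Lemma K_minor_le (T : finType) (e : rel T) n m :
  n <= m -> is_minor (@K_rel m) e -> is_minor (@K_rel n) e.
Proof.
move=> nm; have widen_inj : injective (widen_ord nm).
  by move=> i j /(congr1 val) /= /val_inj.
apply: (minor_sub_inj widen_inj) => i j; by apply: contra => /eqP/widen_inj->.
Qed.

Section BranchUnion.

Variables (B C : finType) (eB : rel B) (eC : rel C) (f : B -> {set C}).
Hypothesis f_branch : branch_map eB eC f.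

Lemma induces_connected_bigcup (S : {set B}) :
  induces_connected eB S -> induces_connected eC (\bigcup_(b in S) f b).
Proof.
have [_ f_con _ f_adj] := f_branch.
set W := \bigcup_(b in S) f b => S_con.
set RW := [rel x y | [&& x \in W, y \in W & eC x y]].
have in_W b x : b \in S -> x \in f b -> x \in W by move=> bS xb; apply/bigcupP; exists b.
have con_in b x y : b \in S -> x \in f b -> y \in f b -> connect RW x y.
  move=> bS xb yb; apply: connect_sub (f_con b x y xb yb) => p q /and3P[pb qb epq].
  by apply: connect1; rewrite /= epq !(in_W b).
suff path_con b p x y : b \in S -> x \in f b ->
    path [rel a c | [&& a \in S, c \in S & eB a c]] b p -> y \in f (last b p) ->
    connect RW x y.
  move=> x y /bigcupP[b bS xb] /bigcupP[c cS yc].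
  case/connectP: (S_con b c bS cS) => p pth c_last.
  by apply: (path_con b p x y bS xb pth); rewrite -c_last.
elim: p b x => [|c p IHp] b x bS xb /=; first by move=> _; apply: con_in.
case/andP=> /and3P[_ cS ebc] pth y_last.
have [_ [s [t [sb tc est]]]] := f_adj b c ebc.
apply: connect_trans (con_in b x s bS xb sb) _.
apply: connect_trans (connect1 _) (IHp c t cS tc pth y_last).
by rewrite /= est (in_W b) ?(in_W c).
Qed.

End BranchUnion.

Lemma minor_trans (A B C : finType) (eA : rel A) (eB : rel B) (eC : rel C) :
  is_minor eA eB -> is_minor eB eC -> is_minor eA eC.
Proof.
move=> /minorP [f1 f1_branch] /minorP [f2 f2_branch].
have [f1_ne f1_con _ f1_adj] := f1_branch.
have [f2_ne _ _ f2_adj] := f2_branch.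
pose g a := \bigcup_(b in f1 a) f2 b.
have g_mem_eq a a' c : c \in g a -> c \in g a' -> a = a'.
  case/bigcupP=> b ba cb /bigcupP[b' ba' cb'].
  move: ba'; rewrite -(branch_mem_eq f2_branch cb cb') => ba'.
  by apply: (branch_mem_eq f1_branch ba).
apply/minorP; exists g; split=> [a|a|a a' aa'|a a' /f1_adj [f1aa' [b [b' [ba ba' ebb']]]]].
- have /set0Pn[b ba] := f1_ne a; have /set0Pn[c cb] := f2_ne b.
  by apply/set0Pn; exists c; apply/bigcupP; exists b.
- by apply: (induces_connected_bigcup f2_branch); apply: f1_con.
- rewrite -setI_eq0; apply/set0Pn => -[c /setIP[ca ca']].
  by move: aa'; rewrite (g_mem_eq _ _ _ ca ca') eqxx.
have [_ [s [t [sb tb' est]]]] := f2_adj b b' ebb'.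
split; last by exists s, t; split=> //; apply/bigcupP; [exists b | exists b'].
apply: contra f1aa' => /eqP gaa'; apply/eqP; congr f1.
have /set0Pn[c ca] : g a != set0 by apply/set0Pn; exists s; apply/bigcupP; exists b.
by apply: (g_mem_eq _ _ c ca); rewrite -gaa'.
Qed.

Definition nedges (T : finType) (e : rel T) := #|[set p : T * T | e p.1 p.2]|.

(* Since [nedges e <= #|T|^2 < (#|T|+1)^3 - #|T|^3], this measure orders graphs
   lexicographically by number of vertices, then number of edges. *)
Definition graph_measure (T : finType) (e : rel T) := #|T| ^ 3 + nedges e.

Lemma nedges_le (T : finType) (e : rel T) : nedges e <= #|T| ^ 2.
Proof. by rewrite /nedges expnS expn1 -card_prod max_card. Qed.

Lemma cube_add_lt k t E : E <= k ^ 2 -> k < t -> k ^ 3 + E < t ^ 3.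
Proof.
move=> Ek kt; have : k.+1 ^ 3 <= t ^ 3 by rewrite leq_exp2r.
by move: Ek; rewrite !expnS !expn0 !muln1 => *; nia.
Qed.

Lemma minor_card_le (U T : finType) (eM : rel U) (e : rel T) :
  is_minor eM e -> #|U| <= #|T|.
Proof. by case/minorP=> f /branch_rep [h h_inj _]; apply: leq_card h_inj. Qed.

Lemma minor_card_eq_hom (U T : finType) (eM : rel U) (e : rel T) :
  is_minor eM e -> #|U| = #|T| -> exists2 h : U -> T, bijective h & graph_hom eM e h.
Proof.
case/minorP=> f f_branch card_eq; have [h h_inj hf] := branch_rep f_branch.
have h_bij : bijective h by apply: inj_card_bij; rewrite ?card_eq.
have [h' _ Kh] := h_bij.
have f_rep u x : x \in f u -> x = h u.
  move=> xu; have := hf (h' x); rewrite Kh => xh.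
  by rewrite (branch_mem_eq f_branch xu xh) Kh.
have [_ _ _ f_adj] := f_branch.
exists h => // u v /f_adj [_ [s [t [su tv est]]]].
by rewrite -(f_rep u s su) -(f_rep v t tv).
Qed.

Lemma nedges_bij_hom_lt (U T : finType) (eM : rel U) (e : rel T) (h : U -> T) :
  bijective h -> graph_hom eM e h -> ~ graph_iso eM e -> nedges eM < nedges e.
Proof.
move=> h_bij h_hom not_iso; have h_inj := bij_inj h_bij.
pose hh (p : U * U) := (h p.1, h p.2).
have hh_inj : injective hh by move=> [a b] [c d] [/h_inj-> /h_inj->].
have sub : hh @: [set p | eM p.1 p.2] \subset [set p | e p.1 p.2].
  by apply/subsetP => q /imsetP[p]; rewrite !inE => /h_hom ep ->.
have [le_edges eq_edges] := subset_leqif_cards sub.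
rewrite card_imset // in le_edges eq_edges.
rewrite ltn_neqAle le_edges andbT /nedges eq_edges.
apply: contra_notN not_iso => /eqP im_edges; exists h; split=> // x y.
apply/idP/idP => [exy|/h_hom //].
have : hh (x, y) \in hh @: [set p | eM p.1 p.2] by rewrite im_edges inE.
by rewrite mem_imset ?inE.
Qed.

Lemma minor_measure_lt (U T : finType) (eM : rel U) (e : rel T) :
  is_minor eM e -> ~ graph_iso eM e -> graph_measure eM < graph_measure e.
Proof.
move=> minor not_iso; have := minor_card_le minor.
rewrite leq_eqVlt => /orP[/eqP card_eq | card_lt].
  have [h h_bij h_hom] := minor_card_eq_hom minor card_eq.
  by rewrite /graph_measure card_eq ltn_add2l (nedges_bij_hom_lt h_bij h_hom).
exact: leq_trans (cube_add_lt (nedges_le eM) card_lt) (leq_addr _ _).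
Qed.

Lemma complete_K_chi_minor (T : finType) (e : rel T) :
  simple_graph e -> complete_graph e -> is_minor (@K_rel (chi e)) e.
Proof.
move=> e_simple e_complete.
apply: K_minor_le ((chi_colorable_min e_simple).2 _ (colorable_card e_simple)) _.
apply: minor_sub_inj (@enum_val_inj _ _) _ (minor_refl e_simple.2) => i j ij.
by apply: e_complete; apply: contra ij => /eqP/enum_val_inj->.
Qed.

Lemma completeP (T : finType) (e : rel T) :
  reflect (complete_graph e) [forall x, forall y, (x != y) ==> e x y].
Proof.
apply: (iffP forallP) => [e_all x y xy | e_complete x].
  exact: implyP (forallP (e_all x) y) xy.
by apply/forallP => y; apply/implyP/e_complete.
Qed.

Lemma K_simple n : simple_graph (@K_rel n).
Proof. by split=> [i j|i]; rewrite /K_rel ?eqxx // eq_sym. Qed.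

Lemma iso_K_complete (T : finType) (e : rel T) n :
  graph_iso (@K_rel n) e -> complete_graph e.
Proof.
case=> h [[h' _ Kh] h_edge] x y xy; rewrite -(Kh x) -(Kh y) h_edge /K_rel.
by apply: contra xy => /eqP/(congr1 h); rewrite !Kh => ->.
Qed.

Lemma hom_K_chi (T : finType) (e : rel T) :
  simple_graph e -> exists f : T -> 'I_(chi e), graph_hom e (@K_rel (chi e)) f.
Proof. by move/chi_colorable_min => [/colorableP]. Qed.

Theorem mainTheorem2 :
  (forall (T : finType) (e : rel T), simple_graph e ->
      is_minor (@K_rel (chi e)) e)
  <->
  (forall (T : finType) (e : rel T), simple_graph e -> ~ complete_graph e ->
      exists (U : finType) (eM : rel U),
        [/\ simple_graph eM, is_minor eM e, ~ graph_iso eM e &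
            exists f : T -> U, graph_hom e eM f]).
Proof.
split=> [K_chi_minor T e e_simple not_complete | proper_minor T e].
  exists 'I_(chi e), (@K_rel (chi e)); split; [exact: K_simple | exact: K_chi_minor | |].
    by move/iso_K_complete.
  exact: hom_K_chi.
move: {-1}(graph_measure e).+1 (ltnSn (graph_measure e)) => n.
elim: n T e => // n IHn T e e_lt e_simple.
have [e_complete | not_complete] := completeP e.
  exact: complete_K_chi_minor.
have [U [eM [eM_simple eM_minor not_iso [f f_hom]]]] := proper_minor T e e_simple not_complete.
have eM_lt : graph_measure eM < n by have := minor_measure_lt eM_minor not_iso; lia.
apply: K_minor_le (chi_hom e_simple eM_simple f_hom) _.
exact: minor_trans (IHn U eM eM_lt eM_simple) eM_minor.
Qed.
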